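(* Let $G$ be a hued patch and let $\varphi:V(C)\to\mathbb{Z}_2^2$ be a single-hexagon 4-coloring of the boundary $C$ of the outer face of $G$, with central hue $c$ and central color $k$. Let $K=\mathbb{Z}_2^2\setminus\{k\}$, let $H$ be the (bipartite) subgraph of $G$ induced by the vertices of hue different from $c$, and let $\varphi'$ be the restriction of $\varphi$ to $V(H)\cap V(C)$. Then $\varphi$ extends to a proper 4-coloring of $G$ if and only if $\varphi'$ extends to a proper 3-coloring of $H$ using the colors in $K$.
   Context: A patch is a connected plane graph all of whose faces, except possibly the outer face, have length three. A hued graph is a graph with a proper coloring $\psi:V\to\mathbb{Z}_3$ (hue); a dappled graph is a hued graph with additionally a proper coloring $\varphi:V\to\mathbb{Z}_2^2$ (color); for a hued graph $C$ and proper $\varphi:V(C)\to\mathbb{Z}_2^2$, $C^\varphi$ is the corresponding dappled graph. Homomorphisms of dappled graphs map adjacent vertices to adjacent vertices and preserve hue and color. The dappled triangular grid $\mathbf{T}$ has vertex set $\mathbb{Z}^2$, with $(i_1,j_1)$ and $(i_2,j_2)$ adjacent iff $(i_2-i_1,j_2-j_1)\in\{\pm(1,0),\pm(0,1),\pm(1,1)\}$, hue $(i+j)\bmod 3$ and color $(i\bmod 2,j\bmod 2)$ at $(i,j)$. A hexagon is the dappled subgraph of $\mathbf{T}$ induced by a vertex (its center) and its neighbors. A 4-coloring $\varphi$ of a connected hued graph $C$ is a single-hexagon coloring if there is a homomorphism $f$ from $C^\varphi$ to $\mathbf{T}$ whose image lies in a hexagon $X$; the central hue and central color are the hue and color of the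 center of $X$. (In that case a vertex of $C$ has color $k$ iff it has hue $c$.) The boundary $C$ carries the hues inherited from $G$. *)

From mathcomp Require Import all_boot all_order all_algebra.
Set Implicit Arguments. Unset Strict Implicit. Unset Printing Implicit Defensive.
Import GRing.Theory Num.Theory.

(* Z_2^2 is represented by bool * bool ; Z_3 by 'Z_3. *)

Definition Tadj (p q : int * int) : bool :=
  let di := (q.1 - p.1)%R in let dj := (q.2 - p.2)%R in
  [|| (di == (Posz 1)) && (dj == (Posz 0)), (di == (-1)%R) && (dj == (Posz 0)),
      (di == (Posz 0)) && (dj == (Posz 1)), (di == (Posz 0)) && (dj == (-1)%R),
      (di == (Posz 1)) && (dj == (Posz 1)) | (di == (-1)%R) && (dj == (-1)%R)].

Definition Thue (p : int * int) : nat := absz ((p.1 + p.2)%R %% (Posz 3))%Z.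

Definition Tcol (p : int * int) : bool * bool :=
  (((p.1 %% (Posz 2))%Z == (Posz 1)), ((p.2 %% (Posz 2))%Z == (Posz 1))).

(* A plane graph is given by a finite vertex type V, a finite dart type D
   (two darts per edge), tail : D -> V, the fixed-point-free involution
   alpha (reversing a dart), and the rotation sigma (a permutation of D whose
   cycles are exactly the sets of darts with a common tail).  Faces are the
   orbits of [face alpha sigma].  The outer face is given by [o]:
   [Some od] = the face orbit of the dart od; [None] only when there are no
   darts at all (the one-vertex graph). *)

Definition face (D : finType) (alpha sigma : D -> D) : D -> D :=
  fun d => sigma (alpha d).

Definition adjG (V D : finType) (tail : D -> V) (alpha : D -> D) : rel V :=
  fun u v => [exists d, (tail d == u) && (tail (alpha d) == v)].

Definition is_patch (V D : finType) (tail : D -> V) (alpha sigma : D -> D)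
    (o : option D) : Prop :=
  [/\ 0 < #|V|,
      [/\ (forall d, alpha (alpha d) = d /\ alpha d != d),
          injective sigma &
          (forall d d', tail d = tail d' <-> fconnect sigma d d')],
      ((forall d, tail (alpha d) != tail d)
        /\ (forall d d', tail d = tail d' -> tail (alpha d) = tail (alpha d') -> d = d')),
      (forall u v, connect (adjG tail alpha) u v) &
      match o with
      | None => #|D| = 0
      | Some od =>
          (* genus 0 (Euler's formula V - E + F = 2) *)
          #|V| + fcard (face alpha sigma) D = #|D| %/ 2 + 2
          /\ (forall d, ~~ fconnect (face alpha sigma) od d ->
                        order (face alpha sigma) d = 3)
      end].

Definition onB (V D : finType) (tail : D -> V) (alpha sigma : D -> D)
    (o : option D) (v : V) : bool :=
  match o with
  | None => true
  | Some od => [exists d, fconnect (face alpha sigma) od d && (tail d == v)]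
  end.

Definition adjC (V D : finType) (tail : D -> V) (alpha sigma : D -> D)
    (o : option D) : rel V :=
  fun u v => match o with
  | None => false
  | Some od => [exists d, fconnect (face alpha sigma) od d &&
                 (((tail d == u) && (tail (alpha d) == v))
                  || ((tail d == v) && (tail (alpha d) == u)))]
  end.

(* phi (restricted to V(C)) is a single-hexagon coloring of C^phi, the witness
   hexagon having center z *)
Definition single_hexagon_at (V D : finType) (tail : D -> V)
    (alpha sigma : D -> D) (o : option D) (psi : V -> 'Z_3)
    (phi : V -> bool * bool) (z : int * int) : Prop :=
  (forall u v, adjC tail alpha sigma o u v -> phi u != phi v) /\
  exists f : V -> int * int,
    [/\ (forall u v, adjC tail alpha sigma o u v -> Tadj (f u) (f v)),
        (forall v, onB tail alpha sigma o v ->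
                   Thue (f v) = nat_of_ord (psi v) /\ Tcol (f v) = phi v) &
        (forall v, onB tail alpha sigma o v -> f v = z \/ Tadj z (f v))].

From mathcomp Require Import all_boot all_order all_algebra.
From HB Require Import structures.
From mathcomp Require Import zify ring.
Set Implicit Arguments.
Unset Strict Implicit.
Unset Printing Implicit Defensive.
Import GRing.Theory Num.Theory.

(* Given a proper 4-coloring chi of G extending phi, every dart uv, whose ends carry
   the labels (psi u, chi u) and (psi v, chi v), determines a unit step of the grid T.
   Around an inner face (a triangle) the three steps add up to zero; around the outer
   face they are the steps of the homomorphism of C into the hexagon, so they add up
   to zero too.  Since the sphere has no 1-cohomology (shown below by counting
   dimensions with Euler's formula), the steps are the differences of a map
   L : V -> Z^2, which is a homomorphism G^chi -> T extending the one on C.  A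
   retraction of T onto the hexagon around its center z, which preserves the edges
   between vertices of hue other than c, turns L into a 3-coloring of H avoiding k
   that agrees with phi on C.  Conversely, a 3-coloring of H avoiding k extends by
   giving every vertex of hue c the color k; on C this agrees with phi, because the
   vertices of C of hue c are mapped to z. *)

Lemma connect_preserved (T : finType) (e : rel T) (P : T -> Prop) x y :
  (forall u w, e u w -> P u -> P w) -> P x -> connect e x y -> P y.
Proof.
move=> eP Px /connectP [p pth ->]; elim: p x pth Px => //= z p IHp x /andP [exz pz] Px.
exact: IHp pz (eP _ _ exz Px).
Qed.

Section SumsAndDimensions.

Local Open Scope ring_scope.

Lemma sum_fconnect_telescope (T : finType) (f : T -> T) (M : zmodType) (h : T -> M) x :
  injective f -> \sum_(y | fconnect f x y) (h (f y) - h y) = 0.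
Proof.
move=> f_inj; rewrite sumrB [X in _ - X](reindex_inj f_inj) /=.
rewrite (eq_bigl (fun y => fconnect f x (f y))) ?subrr // => y.
by rewrite -same_fconnect1_r.
Qed.

Lemma biorthogonal_size_le_dimv (K : fieldType) (I : finType)
    (U : {vspace {ffun I -> K^o}}) (s : seq I) (v : I -> {ffun I -> K^o}) :
  uniq s -> (forall a, a \in s -> v a \in U) ->
  (forall a b, a \in s -> b \in s -> v a b = (a == b)%:R) -> (size s <= \dim U)%N.
Proof.
case: s => [//|a0 s] s_uniq vU v_delta; set s1 := a0 :: s.
have v_free : free (map v s1).
  apply/(@freeP _ _ _ (in_tuple (map v s1))) => k sum0 i.
  have i_lt : (i < size s1)%N by rewrite -(size_map v) ltn_ord.
  have /ffunP/(_ (nth a0 s1 i)) := sum0.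
  rewrite sum_ffunE ffunE (bigD1 i) // big1 => [|j ji].
    rewrite ffunE (nth_map a0) // v_delta ?mem_nth // eqxx => sum_i.
    by rewrite -[RHS]sum_i /= addr0; exact: (esym (mulr1 _)).
  have j_lt : (j < size s1)%N by rewrite -(size_map v) ltn_ord.
  rewrite ffunE (nth_map a0) // v_delta ?mem_nth // nth_uniq //.
  by rewrite (inj_eq val_inj) (negPf ji) scaler0.
rewrite -[size s1](size_map v) -(eqP v_free); apply: dimvS.
by apply/span_subvP => w /mapP [a aS ->]; exact: vU.
Qed.

End SumsAndDimensions.

Section TriangularGrid.

Local Open Scope ring_scope.
Implicit Types (p q z d : int * int) (h : nat) (c : bool * bool).

Definition unit_steps : seq (int * int) :=
  [:: (1, 0); (-1, 0); (0, 1); (0, -1); (1, 1); (-1, -1)].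

Definition col_add c c' : bool * bool := (c.1 (+) c'.1, c.2 (+) c'.2).

Lemma Tadj_unit_steps p q : Tadj p q = (q - p \in unit_steps).
Proof. by rewrite /Tadj !inE !xpair_eqE. Qed.

Lemma Tadj_addr p d : Tadj p (p + d) = (d \in unit_steps).
Proof. by rewrite Tadj_unit_steps addrC addKr. Qed.

Lemma Tadj_addl z p q : Tadj (z + p) (z + q) = Tadj p q.
Proof. by rewrite !Tadj_unit_steps opprD addrACA subrr add0r. Qed.

Lemma Tadj_sym p q : Tadj p q = Tadj q p.
Proof.
rewrite !Tadj_unit_steps -opprB; case: (p - q) => a b.
rewrite !inE !xpair_eqE /=; lia.
Qed.

Lemma Thue_lt p : (Thue p < 3)%N.
Proof. rewrite /Thue; lia. Qed.

Lemma Thue_addr p d : Thue (p + d) = ((Thue p + Thue d) %% 3)%N.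
Proof. by case: p d => [a b] [x y]; rewrite /Thue /=; lia. Qed.

Lemma Tcol_addr p d : Tcol (p + d) = col_add (Tcol p) (Tcol d).
Proof.
case: p d => [a b] [x y]; rewrite /Tcol /col_add /=.
by congr (_, _); apply/idP/idP; lia.
Qed.

(* The hue difference and the color difference of two adjacent grid vertices
   determine the step between them; labels that adjacent vertices cannot carry
   give the junk step 0. *)
Definition grid_step h1 h2 c1 c2 : int * int :=
  match (h2 == (h1 + 1) %% 3)%N, col_add c1 c2 with
  | true, (true, false) => (1, 0)
  | true, (false, true) => (0, 1)
  | true, (true, true) => (-1, -1)
  | false, (true, false) => (-1, 0)
  | false, (false, true) => (0, -1)
  | false, (true, true) => (1, 1)
  | _, _ => 0
  end.

Lemma unit_step_label d :
  d \in unit_steps -> (Thue d != 0%N) && (Tcol d != (false, false)).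
Proof. by move: d; apply/allP. Qed.

Lemma grid_step_spec h1 h2 c1 c2 : (h1 < 3)%N -> (h2 < 3)%N -> h1 != h2 -> c1 != c2 ->
  let d := grid_step h1 h2 c1 c2 in
  [/\ d \in unit_steps, ((h1 + Thue d) %% 3)%N = h2 & col_add c1 (Tcol d) = c2].
Proof.
move: h1 h2 => [|[|[|//]]] [|[|[|//]]] //= _ _ _.
all: by case: c1 c2 => [[] []] [[] []] //= _; split.
Qed.

Lemma grid_step_unit h c d : (h < 3)%N -> d \in unit_steps ->
  grid_step h ((h + Thue d) %% 3) c (col_add c (Tcol d)) = d.
Proof.
move: h => [|[|[|//]]] _ d_unit; apply/eqP; move: d d_unit; apply/allP; by case: c => [[] []].
Qed.

Lemma grid_stepN h1 h2 c1 c2 : (h1 < 3)%N -> (h2 < 3)%N -> h1 != h2 -> c1 != c2 ->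
  grid_step h2 h1 c2 c1 = - grid_step h1 h2 c1 c2.
Proof.
move: h1 h2 => [|[|[|//]]] [|[|[|//]]] //= _ _ _.
all: by case: c1 c2 => [[] []] [[] []].
Qed.

Lemma grid_step_triangle h1 h2 h3 c1 c2 c3 :
  (h1 < 3)%N -> (h2 < 3)%N -> (h3 < 3)%N -> h1 != h2 -> h2 != h3 -> h3 != h1 ->
  c1 != c2 -> c2 != c3 -> c3 != c1 ->
  grid_step h1 h2 c1 c2 + grid_step h2 h3 c2 c3 + grid_step h3 h1 c3 c1 = 0.
Proof.
move: h1 h2 h3 => [|[|[|//]]] [|[|[|//]]] [|[|[|//]]] //= _ _ _ _ _ _.
all: by case: c1 c2 c3 => [[] []] [[] []] [[] []].
Qed.

Lemma Tadj_label_neq p q : Tadj p q -> Thue p != Thue q /\ Tcol p != Tcol q.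
Proof.
rewrite Tadj_unit_steps; move: (q - p) (subrKC p q) => d <-.
move=> /unit_step_label /andP [hue_ne col_ne]; rewrite Thue_addr Tcol_addr; split.
  by move: hue_ne (Thue_lt p) (Thue_lt d); lia.
by move: col_ne; case: (Tcol p) (Tcol d) => [[] []] [[] []].
Qed.

Lemma Tadj_grid_step p h c : (h < 3)%N -> Thue p != h -> Tcol p != c ->
  let q := p + grid_step (Thue p) h (Tcol p) c in
  [/\ Tadj p q, Thue q = h & Tcol q = c].
Proof.
move=> h_lt hue_ne col_ne.
have [d_unit d_hue d_col] := grid_step_spec (Thue_lt p) h_lt hue_ne col_ne.
by rewrite /= Tadj_addr Thue_addr Tcol_addr.
Qed.

Lemma Tadj_grid_stepE p q : Tadj p q -> q = p + grid_step (Thue p) (Thue q) (Tcol p) (Tcol q).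
Proof.
rewrite Tadj_unit_steps; move: (q - p) (subrKC p q) => d <- d_unit.
by rewrite Thue_addr Tcol_addr grid_step_unit ?Thue_lt.
Qed.

(* Sends a vertex of hue 1 (resp. 2) to the hexagon vertex of hue 1 (resp. 2) around
   the origin that lies in the same angular sector. *)
Definition hex_sector p : int * int :=
  let: (a, b) := p in
  if ((a + b) %% 3 == 1)%Z then
    if (a <= 0) && (b <= 0) then (-1, -1) else if a <= b then (0, 1) else (1, 0)
  else
    if (0 <= a) && (0 <= b) then (1, 1) else if a <= b then (-1, 0) else (0, -1).

Lemma hex_sector_unit p : hex_sector p \in unit_steps.
Proof. by case: p => a b /=; repeat case: ifP. Qed.

Lemma hex_sector_id d : d \in unit_steps -> hex_sector d = d.
Proof. by move=> d_unit; apply/eqP; move: d d_unit; apply/allP. Qed.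

Lemma hex_sector_Tadj p q : Tadj p q -> Thue p != 0%N -> Thue q != 0%N ->
  Tadj (hex_sector p) (hex_sector q).
Proof.
wlog p1 : p q / Thue p = 1%N.
  move=> wlog pq p0 q0; have [pq_hue _] := Tadj_label_neq pq.
  have [/wlog|p_ne1] := eqVneq (Thue p) 1%N; first exact.
  rewrite Tadj_sym; apply: wlog => //; last by rewrite Tadj_sym.
  by move: p0 q0 p_ne1 pq_hue (Thue_lt p) (Thue_lt q); lia.
move=> pq _ q0; have q2 : Thue q = 2%N.
  by have [+ _] := Tadj_label_neq pq; move: q0 (Thue_lt q); rewrite p1; lia.
move: pq p1 q2; rewrite Tadj_unit_steps; move: (q - p) (subrKC p q) => d <-.
case: p d => a b [x y]; rewrite /Thue /= => d_unit p1 q2.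
have -> : ((a + b) %% 3 == 1)%Z by apply/eqP; lia.
have -> : ((a + x + (b + y)) %% 3 == 1)%Z = false by apply/eqP; lia.
move: d_unit; rewrite Tadj_unit_steps !inE !xpair_eqE /=.
by repeat case: ifP; move=> *; try done; exfalso; lia.
Qed.

Definition hex_retract z p := z + hex_sector (p - z).

Lemma hex_retract_Tadj_center z p : Tadj z (hex_retract z p).
Proof. by rewrite Tadj_addr hex_sector_unit. Qed.

Lemma hex_retract_id z p : Tadj z p -> hex_retract z p = p.
Proof. by rewrite Tadj_unit_steps /hex_retract => /hex_sector_id ->; rewrite subrKC. Qed.

Lemma hex_retract_Tadj z p q : Tadj p q -> Thue p != Thue z -> Thue q != Thue z ->
  Tadj (hex_retract z p) (hex_retract z q).
Proof.
have hue_ne r : Thue r != Thue z -> Thue (r - z) != 0%N.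
  move: (r - z) (subrKC z r) => d <-; rewrite Thue_addr.
  by move: (Thue_lt z) (Thue_lt d); lia.
move=> pq /hue_ne p0 /hue_ne q0; rewrite Tadj_addl hex_sector_Tadj //.
by rewrite -(Tadj_addl z) !subrKC.
Qed.

End TriangularGrid.

Section PlanarMap.

Variables (V D : finType) (tail : D -> V) (alpha sigma : D -> D).
Hypothesis alpha_inv_fpf : forall d, alpha (alpha d) = d /\ alpha d != d.
Hypothesis sigma_inj : injective sigma.
Hypothesis tail_sigma_orbit : forall d d', tail d = tail d' <-> fconnect sigma d d'.
Hypothesis adjG_connected : forall u v, connect (adjG tail alpha) u v.
Hypothesis euler : (#|V| + fcard (face alpha sigma) D = #|D| %/ 2 + 2)%N.

Local Open Scope ring_scope.
Local Notation fc := (face alpha sigma).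

Let alphaK : involutive alpha. Proof. by move=> d; case: (alpha_inv_fpf d). Qed.
Let alpha_inj : injective alpha := inv_inj alphaK.
Let fc_inj : injective fc.
Proof. by move=> d e /sigma_inj; exact: alpha_inj. Qed.
Let tail_fc d : tail (fc d) = tail (alpha d).
Proof. by apply/esym/tail_sigma_orbit; apply: fconnect1. Qed.

Lemma darts_ind (P : D -> Prop) d0 : P d0 ->
  (forall d, P d -> P (alpha d)) -> (forall d, P d -> P (fc d)) -> forall d, P d.
Proof.
move=> Pd0 P_alpha P_fc.
have P_tail d d' : P d -> tail d = tail d' -> P d'.
  move=> Pd /tail_sigma_orbit /(connect_preserved (P := P)); apply=> //.
  by move=> e _ /eqP <- Pe; rewrite -[e]alphaK; apply/P_fc/P_alpha.
have P_vertex v : exists2 d, tail d = v & P d.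
  apply: (connect_preserved (P := fun v => exists2 d, tail d = v & P d) _ _
    (adjG_connected (tail d0) v)); last by exists d0.
  move=> u w /existsP [e /andP [/eqP eu /eqP ew]] [d du Pd].
  by exists (alpha e) => //; apply: P_alpha (P_tail d _ Pd _); rewrite du eu.
by move=> d; have [d' d'E Pd'] := P_vertex (tail d); exact: P_tail Pd' d'E.
Qed.

Section Cochains.

Variable K : fieldType.
Local Notation dart_fun := {ffun D -> K^o}.
Local Notation vertex_fun := {ffun V -> K^o}.

Definition alpha_sum (g : dart_fun) : dart_fun := [ffun d => g d + g (alpha d)].
Definition face_sum (g : dart_fun) : dart_fun := [ffun x => \sum_(e | fconnect fc x e) g e].
Definition coboundary (f : vertex_fun) : dart_fun :=
  [ffun d => f (tail (alpha d)) - f (tail d)].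

Fact alpha_sum_is_linear : linear alpha_sum.
Proof. by move=> a g h; apply/ffunP => d; rewrite !ffunE scalerDr addrACA. Qed.
Fact face_sum_is_linear : linear face_sum.
Proof.
move=> a g h; apply/ffunP => x; rewrite !ffunE scaler_sumr -big_split.
by apply: eq_bigr => e _; rewrite !ffunE.
Qed.
Fact coboundary_is_linear : linear coboundary.
Proof. by move=> a f f'; apply/ffunP => d; rewrite !ffunE scalerBr addrACA opprD. Qed.

HB.instance Definition _ :=
  GRing.isLinear.Build K dart_fun dart_fun _ alpha_sum alpha_sum_is_linear.
HB.instance Definition _ :=
  GRing.isLinear.Build K dart_fun dart_fun _ face_sum face_sum_is_linear.
HB.instance Definition _ :=
  GRing.isLinear.Build K vertex_fun dart_fun _ coboundary coboundary_is_linear.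

(* The cocycles are the dart functions in [lker A :&: lker F]: antisymmetric under
   [alpha], with zero sum around every face. *)
Local Notation A := (linfun alpha_sum).
Local Notation F := (linfun face_sum).
Local Notation B := (linfun coboundary).

Lemma limg_coboundary_sub : (limg B <= lker A :&: lker F)%VS.
Proof.
apply/subvP => _ /memv_imgP [f _ ->]; rewrite memv_cap !memv_ker !lfunE /=.
apply/andP; split; apply/eqP/ffunP => x; rewrite !ffunE.
  by rewrite alphaK addrA subrK subrr.
rewrite -[RHS](sum_fconnect_telescope (fun e => f (tail e)) x fc_inj).
by apply: eq_bigr => e _; rewrite ffunE tail_fc.
Qed.

Lemma dim_limg_coboundary : (#|V| <= \dim (limg B) + 1)%N.
Proof.
have := limg_ker_dim B fullv; rewrite capfv dimvf /dim /= muln1 => <-.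
rewrite addnC leq_add2l.
apply: (@leq_trans (\dim <[[ffun=> 1] : vertex_fun]>)); last by rewrite dim_vline leq_b1.
apply: dimvS; apply/subvP => f; rewrite memv_ker lfunE /= => /eqP Bf0.
have f_adj u w : adjG tail alpha u w -> f u = f w.
  case/existsP => d /andP [/eqP <- /eqP <-]; apply/esym/eqP.
  by rewrite -subr_eq0; have /ffunP/(_ d) := Bf0; rewrite !ffunE => ->.
apply/vlineP; case: (pickP (@predT V)) => [v0 _ | V0]; last first.
  by exists 0; apply/ffunP => v; have := V0 v.
exists (f v0); apply/ffunP => v; rewrite !ffunE -[RHS]/(f v0 * 1) mulr1.
apply: (connect_preserved (P := fun w => f w = f v0) _ _ (adjG_connected v0 v)) => //.
by move=> u w /f_adj <-.
Qed.

Let half_darts := [set d | (enum_rank d < enum_rank (alpha d))%N].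

Let alpha_half_darts d : (alpha d \in half_darts) = (d \notin half_darts).
Proof.
rewrite !inE alphaK; case: ltngtP => // /val_inj/enum_rank_inj dE.
by have := (alpha_inv_fpf d).2; rewrite dE eqxx.
Qed.

Let card_half_darts : #|D| = (#|half_darts| + #|half_darts|)%N.
Proof.
rewrite -(cardsC half_darts) -[#|~: _|](card_imset _ alpha_inj).
suff -> : alpha @: (~: half_darts) = half_darts by [].
apply/setP => d; apply/imsetP/idP => [[e eN ->] | dH].
  by rewrite alpha_half_darts -in_setC.
by exists (alpha d); rewrite ?alphaK // in_setC alpha_half_darts negbK.
Qed.

Let delta (a : D) : dart_fun := [ffun d => (d == a)%:R].

Lemma dim_lker_alpha_sum : (\dim (lker A) <= #|D| %/ 2)%N.
Proof.
have := limg_ker_dim A fullv; rewrite capfv dimvf /dim /= muln1.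
have : (#|half_darts| <= \dim (limg A))%N.
  rewrite cardE.
  apply: (biorthogonal_size_le_dimv (v := fun a => A (delta a)) (enum_uniq _)) => [a _|a b].
    exact/memv_img/memvf.
  rewrite !mem_enum => aH bH; rewrite lfunE /= !ffunE eq_sym.
  suff /negPf-> : alpha b != a by rewrite addr0.
  by apply: contraTneq aH => <-; rewrite alpha_half_darts bH.
rewrite card_half_darts addnn -mul2n mulKn //; lia.
Qed.

Let face_ind (r : D) : dart_fun := [ffun x => (fconnect fc x r)%:R].

Let sum_delta (P : pred D) e : \sum_(d | P d) delta e d = (P e)%:R.
Proof.
case: (boolP (P e)) => Pe; last first.
  by rewrite big1 // => d Pd; rewrite ffunE; case: eqP Pe => // <-; rewrite Pd.
rewrite (bigD1 e) //= big1 => [|d /andP [_ /negPf de]]; first by rewrite ffunE eqxx addr0.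
by rewrite ffunE de.
Qed.

Let face_ind_alpha_img e : face_ind e - face_ind (alpha e) \in (F @: lker A)%VS.
Proof.
have -> : face_ind e - face_ind (alpha e) = F (delta e - delta (alpha e)).
  apply/ffunP => x; rewrite lfunE !ffunE /=.
  under eq_bigr => y _ do rewrite ffunE [X in _ + X]ffunE.
  by rewrite sumrB !sum_delta.
apply: memv_img; rewrite memv_ker lfunE; apply/eqP/ffunP => x; rewrite !ffunE.
have -> : (alpha x == e) = (x == alpha e) by rewrite -(inj_eq alpha_inj) alphaK.
by rewrite (inj_eq alpha_inj) -opprB addNr.
Qed.

Let face_ind_fc e : face_ind (fc e) = face_ind e.
Proof. by apply/ffunP => x; rewrite !ffunE -same_fconnect1_r. Qed.

Lemma dim_face_sum_img : (fcard fc D <= \dim (F @: lker A) + 1)%N.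
Proof.
have -> : fcard fc D = #|froots fc| by apply: eq_card => x; rewrite !inE andbT.
case: (pickP (froots fc)) => [r0 r0_root | no_root]; last by rewrite eq_card0.
have face_ind_img d : face_ind d - face_ind r0 \in (F @: lker A)%VS.
  move: d; apply: (darts_ind (d0 := r0)) => [|e eW|e]; first by rewrite subrr mem0v.
    rewrite -[face_ind (alpha e) - _](subrKA (face_ind e)) addrC.
    by rewrite memvD // -opprB memvN face_ind_alpha_img.
  by rewrite face_ind_fc.
have root_fconnect x y : froots fc x -> froots fc y -> fconnect fc x y = (x == y).
  move=> /eqP rx /eqP ry; rewrite -root_connect ?rx ?ry //.
  exact: fconnect_sym fc_inj.
rewrite (cardD1 r0) [r0 \in _]r0_root addnC leq_add2r cardE.
apply: (biorthogonal_size_le_dimv (v := fun r => face_ind r - face_ind r0))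
  (enum_uniq _) _ _ => [r _ | a b]; first exact: face_ind_img.
rewrite !mem_enum !inE => /andP [a_r0 a_root] /andP [b_r0 b_root].
by rewrite !ffunE !root_fconnect // (negPf b_r0) subr0 eq_sym.
Qed.

(* dim (lker A :&: lker F) = dim (lker A) - dim (F @: lker A) <= E - (#faces - 1),
   which is |V| - 1 by Euler's formula |V| + #faces = E + 2, with E = #|D| / 2. *)
Lemma limg_coboundary : limg B = (lker A :&: lker F)%VS.
Proof.
apply/eqP; rewrite eqEdim limg_coboundary_sub /=.
have := limg_ker_dim F (lker A); have := dim_lker_alpha_sum.
have := dim_face_sum_img; have := dim_limg_coboundary.
lia.
Qed.

Lemma closed_form_exact (g : D -> K) :
  (forall d, g (alpha d) = - g d) -> (forall x, \sum_(e | fconnect fc x e) g e = 0) ->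
  exists f : V -> K, forall d, g d = f (tail (alpha d)) - f (tail d).
Proof.
move=> g_anti g_face; have : ([ffun d => g d] : dart_fun) \in limg B.
  rewrite limg_coboundary memv_cap !memv_ker !lfunE /=.
  apply/andP; split; apply/eqP/ffunP => x; rewrite !ffunE.
    by rewrite g_anti subrr.
  by rewrite -[RHS](g_face x); apply: eq_bigr => e _; rewrite ffunE.
case/memv_imgP => f _ /ffunP gE; exists f => d.
by have := gE d; rewrite lfunE !ffunE.
Qed.

End Cochains.

Lemma closed_int_form_exact (g : D -> int) :
  (forall d, g (alpha d) = - g d) -> (forall x, \sum_(e | fconnect fc x e) g e = 0) ->
  exists f : V -> int, forall d, g d = f (tail (alpha d)) - f (tail d).
Proof.
move=> g_anti g_face.
have [f fE] : exists f : V -> rat, forall d, (g d)%:~R = f (tail (alpha d)) - f (tail d).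
  apply: closed_form_exact => [d | x]; first by rewrite g_anti mulrNz.
  by rewrite -mulrz_sumr g_face.
case: (pickP (@predT V)) => [v0 _ | V0]; last by exists (fun=> 0) => d; have := V0 (tail d).
have f_int v : exists n : int, f v - f v0 = n%:~R.
  apply: (connect_preserved (P := fun v => exists n : int, f v - f v0 = n%:~R) _ _
    (adjG_connected v0 v)); last by exists 0; rewrite subrr.
  move=> u w /existsP [d /andP [/eqP <- /eqP <-]] [n nE].
  by exists (n + g d); rewrite intrD -nE fE; ring.
have [n nE] := fin_all_exists f_int; exists n => d.
by apply: (@intr_inj rat); rewrite intrB -!nE fE; ring.
Qed.

Section GridLift.

Variable od : D.
Hypothesis inner_faces_triangles : forall d, ~~ fconnect fc od d -> order fc d = 3.

Variables (psi : V -> 'Z_3) (chi : V -> bool * bool) (f0 : V -> int * int).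
Hypothesis psi_proper : forall u v, adjG tail alpha u v -> psi u != psi v.
Hypothesis chi_proper : forall u v, adjG tail alpha u v -> chi u != chi v.
Hypothesis f0_Tadj : forall u v, adjC tail alpha sigma (Some od) u v -> Tadj (f0 u) (f0 v).
Hypothesis f0_label : forall v, onB tail alpha sigma (Some od) v ->
  Thue (f0 v) = psi v /\ Tcol (f0 v) = chi v.

Local Notation onC := (onB tail alpha sigma (Some od)).

Let adjG_dart d : adjG tail alpha (tail d) (tail (alpha d)).
Proof. by apply/existsP; exists d; rewrite !eqxx. Qed.
Let psi_dart d : (psi (tail d) : nat) != psi (tail (alpha d)).
Proof. exact: psi_proper (adjG_dart d). Qed.
Let chi_dart d : chi (tail d) != chi (tail (alpha d)).
Proof. exact: chi_proper (adjG_dart d). Qed.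

Definition dart_step d : int * int :=
  grid_step (psi (tail d)) (psi (tail (alpha d))) (chi (tail d)) (chi (tail (alpha d))).

Lemma dart_stepN d : dart_step (alpha d) = - dart_step d.
Proof. by rewrite /dart_step alphaK grid_stepN. Qed.

Lemma outer_face_dart_step e :
  fconnect fc od e -> f0 (tail (alpha e)) = f0 (tail e) + dart_step e.
Proof.
move=> od_e; have e_C : onC (tail e) by apply/existsP; exists e; rewrite od_e eqxx.
have ae_C : onC (tail (alpha e)).
  apply/existsP; exists (fc e); rewrite tail_fc eqxx andbT.
  exact: connect_trans od_e (fconnect1 _ _).
have /Tadj_grid_stepE -> : Tadj (f0 (tail e)) (f0 (tail (alpha e))).
  by apply/f0_Tadj/existsP; exists e; rewrite od_e !eqxx.
have [hue_e col_e] := f0_label e_C; have [hue_ae col_ae] := f0_label ae_C.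
by rewrite hue_e col_e hue_ae col_ae.
Qed.

Lemma face_sum_dart_step x : \sum_(e | fconnect fc x e) dart_step e = 0.
Proof.
have [od_x | x_inner] := boolP (fconnect fc od x).
  rewrite -[RHS](sum_fconnect_telescope (fun e => f0 (tail e)) x fc_inj).
  apply: eq_bigr => e x_e.
  by rewrite tail_fc (outer_face_dart_step (connect_trans od_x x_e)) addrC addKr.
have x3 := inner_faces_triangles x_inner.
rewrite (eq_bigl (fun e => e \in orbit fc x)) => [|e]; last by rewrite fconnect_orbit.
rewrite -big_uniq ?orbit_uniq // /orbit x3 /= !big_cons big_nil addr0 addrA.
have fc3 : fc (fc (fc x)) = x by have := iter_order fc_inj x; rewrite x3.
have tail3 : tail (alpha (fc (fc x))) = tail x by rewrite -tail_fc fc3.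
have := psi_dart x; have := psi_dart (fc x); have := psi_dart (fc (fc x)).
have := chi_dart x; have := chi_dart (fc x); have := chi_dart (fc (fc x)).
rewrite /dart_step tail3 !tail_fc => col3 col2 col1 hue3 hue2 hue1.
exact: grid_step_triangle (ltn_ord _) (ltn_ord _) (ltn_ord _) hue1 hue2 hue3 col1 col2 col3.
Qed.

Lemma dart_step_potential :
  exists P : V -> int * int, forall d, dart_step d = P (tail (alpha d)) - P (tail d).
Proof.
have exact_coord (pr : int * int -> int) :
    {morph pr : p q / p + q} -> {morph pr : p / - p} -> pr 0 = 0 ->
  exists f : V -> int, forall d, pr (dart_step d) = f (tail (alpha d)) - f (tail d).
  move=> prD prN pr0.
  apply: closed_int_form_exact => [d | x]; first by rewrite dart_stepN prN.
  by rewrite -(big_morph pr prD pr0) face_sum_dart_step.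
have [f1 f1E] := exact_coord fst (fun _ _ => erefl) (fun _ => erefl) erefl.
have [f2 f2E] := exact_coord snd (fun _ _ => erefl) (fun _ => erefl) erefl.
by exists (fun v => (f1 v, f2 v)) => d; rewrite [LHS]surjective_pairing f1E f2E.
Qed.

Section Lift.

Variable P : V -> int * int.
Hypothesis P_potential : forall d, dart_step d = P (tail (alpha d)) - P (tail d).

Definition grid_lift v := f0 (tail od) + (P v - P (tail od)).

Lemma grid_lift_dart d : grid_lift (tail (alpha d)) = grid_lift (tail d) + dart_step d.
Proof. by rewrite /grid_lift P_potential; ring. Qed.

Lemma grid_lift_dart_Tadj d :
  Thue (grid_lift (tail d)) = psi (tail d) -> Tcol (grid_lift (tail d)) = chi (tail d) ->
  [/\ Tadj (grid_lift (tail d)) (grid_lift (tail (alpha d))),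
      Thue (grid_lift (tail (alpha d))) = psi (tail (alpha d)) &
      Tcol (grid_lift (tail (alpha d))) = chi (tail (alpha d))].
Proof.
move=> hue_d col_d; rewrite grid_lift_dart /dart_step -hue_d -col_d.
by apply: Tadj_grid_step; rewrite ?ltn_ord ?hue_d ?col_d.
Qed.

Lemma grid_lift_label v : Thue (grid_lift v) = psi v /\ Tcol (grid_lift v) = chi v.
Proof.
apply: (connect_preserved
  (P := fun v => Thue (grid_lift v) = psi v /\ Tcol (grid_lift v) = chi v)
  _ _ (adjG_connected (tail od) v)).
  move=> u w /existsP [d /andP [/eqP <- /eqP <-]] [hue_d col_d].
  by have [] := grid_lift_dart_Tadj hue_d col_d.
rewrite /grid_lift subrr addr0; apply: f0_label.
by apply/existsP; exists od; rewrite connect0 eqxx.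
Qed.

Lemma grid_lift_Tadj u v : adjG tail alpha u v -> Tadj (grid_lift u) (grid_lift v).
Proof.
case/existsP => d /andP [/eqP <- /eqP <-]; have [hue_d col_d] := grid_lift_label (tail d).
by have [] := grid_lift_dart_Tadj hue_d col_d.
Qed.

Lemma grid_lift_outer v : onC v -> grid_lift v = f0 v.
Proof.
case/existsP => e /andP [od_e /eqP <-].
suff [] : fconnect fc od e /\ grid_lift (tail e) = f0 (tail e) by [].
apply: (connect_preserved
  (P := fun e => fconnect fc od e /\ grid_lift (tail e) = f0 (tail e)) _ _ od_e).
  move=> e1 _ /eqP <- [od_e1 lift_e1]; split; first exact: connect_trans od_e1 (fconnect1 _ _).
  by rewrite tail_fc grid_lift_dart lift_e1 outer_face_dart_step.
by rewrite connect0 /grid_lift subrr addr0.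
Qed.

End Lift.

End GridLift.

End PlanarMap.

Lemma patch_grid_lift (V D : finType) (tail : D -> V) (alpha sigma : D -> D) (o : option D)
    (psi : V -> 'Z_3) (chi : V -> bool * bool) (f0 : V -> int * int) :
  is_patch tail alpha sigma o ->
  (forall u v, adjG tail alpha u v -> psi u != psi v) ->
  (forall u v, adjG tail alpha u v -> chi u != chi v) ->
  (forall u v, adjC tail alpha sigma o u v -> Tadj (f0 u) (f0 v)) ->
  (forall v, onB tail alpha sigma o v -> Thue (f0 v) = psi v /\ Tcol (f0 v) = chi v) ->
  exists L : V -> int * int,
    [/\ forall u v, adjG tail alpha u v -> Tadj (L u) (L v),
        forall v, Thue (L v) = psi v /\ Tcol (L v) = chi v &
        forall v, onB tail alpha sigma o v -> L v = f0 v].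
Proof.
case: o => [od|] [_ [alpha_inv sigma_inj tail_orbit] _ connected faces] psi_proper chi_proper
  f0_Tadj f0_label; last first.
  exists f0; split=> // [u v /existsP [d _] | v]; first by have := card0_eq faces d.
  exact: f0_label.
case: faces => euler triangles.
have [P P_potential] := dart_step_potential alpha_inv sigma_inj tail_orbit connected euler
  triangles psi_proper chi_proper f0_Tadj f0_label.
exists (grid_lift tail od f0 P); split=> [u v uv | v | v vC].
- exact: (grid_lift_Tadj connected psi_proper chi_proper f0_label P_potential uv).
- exact: (grid_lift_label connected psi_proper chi_proper f0_label P_potential v).
- exact: (grid_lift_outer tail_orbit f0_Tadj f0_label P_potential vC).
Qed.

Lemma hexagon_center_of_hue z p : p = z \/ Tadj z p -> Thue p = Thue z -> p = z.
Proof. by case=> // /Tadj_label_neq [/eqP hue_ne _] /esym. Qed.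

Lemma proper_extension_by_hue_class (V : finType) (adj : rel V) (H C : eqType)
    (psi : V -> H) (chi : V -> C) (c : H) (k : C) :
  (forall u v, adj u v -> psi u != psi v) ->
  (forall v, psi v != c -> chi v != k) ->
  (forall u v, psi u != c -> psi v != c -> adj u v -> chi u != chi v) ->
  forall u v, adj u v ->
    (if psi u == c then k else chi u) != (if psi v == c then k else chi v).
Proof.
move=> psi_proper chi_k chi_proper u v uv; have := psi_proper u v uv.
have [u_c | u_c] := eqVneq (psi u) c; have [v_c | v_c] := eqVneq (psi v) c.
- by rewrite u_c v_c eqxx.
- by move=> _; rewrite eq_sym chi_k.
- by move=> _; rewrite chi_k.
- by move=> _; rewrite chi_proper.
Qed.

Theorem corollary11 (V D : finType) (tail : D -> V) (alpha sigma : D -> D)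
    (o : option D) (psi : V -> 'Z_3) (phi : V -> bool * bool)
    (c : 'Z_3) (k : bool * bool) :
  is_patch tail alpha sigma o ->
  (forall u v, adjG tail alpha u v -> psi u != psi v) ->
  (exists z, single_hexagon_at tail alpha sigma o psi phi z
             /\ Thue z = nat_of_ord c /\ Tcol z = k) ->
  (exists chi : V -> bool * bool,
      (forall u v, adjG tail alpha u v -> chi u != chi v) /\
      (forall v, onB tail alpha sigma o v -> chi v = phi v))
  <->
  (exists chi : V -> bool * bool,
      [/\ (forall v, psi v != c -> chi v != k),
          (forall u v, psi u != c -> psi v != c -> adjG tail alpha u v ->
                       chi u != chi v) &
          (forall v, psi v != c -> onB tail alpha sigma o v -> chi v = phi v)]).
Proof.
move=> patch psi_proper [z [[_ [f [f_Tadj f_label f_hex]]] [z_hue z_col]]].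
have hue_ne v : psi v != c -> (psi v : nat) != Thue z by rewrite z_hue (inj_eq val_inj).
have f_center v : onB tail alpha sigma o v -> psi v = c -> f v = z.
  move=> vC v_c; apply: hexagon_center_of_hue (f_hex v vC) _.
  by rewrite (f_label v vC).1 z_hue v_c.
have f_near v : onB tail alpha sigma o v -> psi v != c -> Tadj z (f v).
  by move=> vC /hue_ne; rewrite -(f_label v vC).1; case: (f_hex v vC) => // ->; rewrite eqxx.
split=> [[chi [chi_proper chi_phi]] | [chi [chi_k chi_proper chi_phi]]].
- have [|L [L_Tadj L_label L_f]] := patch_grid_lift patch psi_proper chi_proper f_Tadj.
    by move=> v vC; rewrite chi_phi //; exact: f_label.
  have L_hue v : psi v != c -> Thue (L v) != Thue z by rewrite (L_label v).1; exact: hue_ne.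
  exists (fun v => Tcol (hex_retract z (L v))); split.
  + move=> v _; rewrite -z_col eq_sym.
    by case: (Tadj_label_neq (hex_retract_Tadj_center z (L v))).
  + move=> u v u_c v_c /L_Tadj uv.
    by case: (Tadj_label_neq (hex_retract_Tadj uv (L_hue u u_c) (L_hue v v_c))).
  + move=> v v_c vC; rewrite L_f // hex_retract_id; first exact: (f_label v vC).2.
    exact: f_near.
- exists (fun v => if psi v == c then k else chi v); split.
  + exact: proper_extension_by_hue_class.
  + move=> v vC; case: eqP => [v_c | /eqP v_c]; last exact: chi_phi.
    by rewrite -(f_label v vC).2 f_center.
Qed.
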